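(* Let $k\ge2$, $1\le m<k$, and alternatives $\ell=1,\dots,k$ with i.i.d. replications (independent across alternatives) whose means are pairwise distinct and ordered $\mu_{\langle 1\rangle}>\dots>\mu_{\langle k\rangle}$, satisfying Assumptions 1–4 of the context. Let $i\in\{1,\dots,m\}$, $j\in\{m+1,\dots,k\}$ and $r_{\langle i\rangle},r_{\langle j\rangle}>0$. Then the function $x\mapsto r_{\langle i\rangle}\Lambda^*_{\langle i\rangle}(x)+r_{\langle j\rangle}\Lambda^*_{\langle j\rangle}(x)$ has a unique infimum (minimizing) point.
   Context: $\bar X_\ell(n)$ is the sample mean of $n$ replications of alternative $\ell$, $\Lambda^{(n)}_\ell(\lambda)=\log\mathbb E[e^{\lambda\bar X_\ell(n)}]$. Assumption 1: $\Lambda_\ell(\lambda)=\lim_{n\to\infty}\frac1n\Lambda^{(n)}_\ell(n\lambda)$ exists as an extended real number for all $\lambda$. With $\mathcal D_{\Lambda_\ell}=\{\lambda:\Lambda_\ell(\lambda)<\infty\}$, interior $\mathcal D^o_{\Lambda_\ell}$, and $\mathcal F_\ell=\{\Lambda'_\ell(\lambda):\lambda\in\mathcal D^o_{\Lambda_\ell}\}$, interior $\mathcal F^o_\ell$: Assumption 2: $0\in\mathcal D^o_{\Lambda_\ell}$. Assumption 3: $\Lambda_\ell$ strictly convex, continuous on $\mathcal D^o_{\Lambda_\ell}$ and steep ($|\Lambda'_\ell(\lambda_n)|\to\infty$ along sequences tending to a boundary point of $\mathcal D^o_{\Lambda_\ell}$). Assumption 4: $[\mu_{\langle k\rangle},\mu_{\langle1\rangle}]\subset\bigcap_\ell\mathcal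 F^o_\ell$. $\Lambda^*_\ell(x)=\sup_\lambda\{\lambda x-\Lambda_\ell(\lambda)\}$. *)

From HB Require Import structures.
From mathcomp Require Import all_boot all_order all_algebra.
From mathcomp Require Import all_classical all_reals all_analysis.
Set Implicit Arguments. Unset Strict Implicit. Unset Printing Implicit Defensive.
Import Order.TTheory GRing.Theory Num.Theory.
Import numFieldNormedType.Exports.
Local Open Scope classical_set_scope.
Local Open Scope ring_scope.
Local Open Scope ereal_scope.

Section Defs.
Context (R : realType).

(* Limiting scaled log-MGF of the sample mean of i.i.d. replications of X:
   (1/n) log E[exp(n l Xbar(n))] = log E[exp(l X)] for every n, so
   Lambda(l) = log E[exp (l X)]  (value +oo when the MGF is infinite). *)
Definition cgf d (T : measurableType d) (P : probability T R) (X : T -> R)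
  (l : R) : \bar R :=
  match 'E_P[fun t => expR (l * X t)] with
  | r%:E => (ln r)%:E
  | _ => +oo
  end.

Definition legendre (L : R -> \bar R) (x : R) : \bar R :=
  ereal_sup [set (l * x)%:E - L l | l in [set: R]].

Definition dom_eff (L : R -> \bar R) : set R := [set l | L l < +oo].
Definition dom_int (L : R -> \bar R) : set R := interior (dom_eff L).

Definition Lfin (L : R -> \bar R) : R -> R := fun l => fine (L l).

Definition grad_range (L : R -> \bar R) : set R :=
  [set derive1 (Lfin L) l | l in dom_int L].

Definition assumption2 (L : R -> \bar R) : Prop := dom_int L 0%R.

(* Assumption 3: strictly convex, continuous (and differentiable, so that
   Lambda' makes sense) on the interior of the domain, and steep. *)
Definition assumption3 (L : R -> \bar R) : Prop :=
  [/\ (forall x y t : R, dom_int L x -> dom_int L y -> x != y ->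
         (0 < t < 1)%R ->
         (Lfin L (t * x + (1 - t) * y) < t * Lfin L x + (1 - t) * Lfin L y)%R),
      (forall x, dom_int L x -> {for x, continuous (Lfin L)}),
      (forall x, dom_int L x -> derivable (Lfin L) x 1%R) &
      (forall (s : nat -> R) (b : R), (forall n, dom_int L (s n)) ->
         (closure (dom_int L) `\` dom_int L) b ->
         s @ \oo --> b ->
         (fun n => `|derive1 (Lfin L) (s n)|%R) @ \oo --> +oo%R)].

End Defs.

From HB Require Import structures.
From mathcomp Require Import all_boot all_order all_algebra.
From mathcomp Require Import all_classical all_reals all_analysis.
From mathcomp Require Import measurable_realfun ring lra.
Import Order.TTheory GRing.Theory Num.Theory.
Import numFieldNormedType.Exports.
Local Open Scope ring_scope.

(* By Assumption 4, Lambda_i' takes the value mu_j and Lambda_j' the value mu_i,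
   so Darboux's theorem applied to t |-> r_i Lambda_i(r_j t) + r_j Lambda_j(-r_i t)
   gives l_i <= 0 <= l_j with r_i l_i + r_j l_j = 0 and a common slope
   x* = Lambda_i'(l_i) = Lambda_j'(l_j).  Bounding each Legendre transform below
   by its affine minorant y |-> l y - Lambda(l) at l_i resp. l_j shows that
   r_i Lambda_i^* + r_j Lambda_j^* is bounded below by a constant; the bound is
   attained at x*, where the tangent lines of Lambda_i and Lambda_j support the
   graphs.  At any other minimizer z both minorants are attained, so l_i
   maximizes l z - Lambda_i(l), which forces z = Lambda_i'(l_i) = x*. *)

Set Implicit Arguments.
Unset Strict Implicit.

Section real_derivative.
Context {R : realFieldType}.
Implicit Types (f : R -> R) (a b df e t x y z : R).

Lemma is_derive_scale a t : is_derive t 1 (fun s => a * s) a.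
Proof. by apply: DeriveDef; [exact: derivableM | rewrite deriveMl // derive_id mulr1]. Qed.

Lemma is_derive_comp_affine f a b t df : is_derive (a + b * t) 1 f df ->
  is_derive t 1 (fun s => f (a + b * s)) (b * df).
Proof.
move=> fdf; have bt := is_derive_scale b t.
have dl : is_derive t 1 (fun s => a + b * s) b by apply: is_derive_eq; rewrite add0r.
apply: DeriveDef.
  apply/derivable1_diffP/differentiable_comp; apply/derivable1_diffP.
  - exact: ex_derive.
  - by case: fdf.
rewrite -derive1E (derive1_comp (f := fun s => a + b * s) (g := f)).
- by rewrite !derive1E !derive_val mulrC.
- exact: ex_derive.
- by case: fdf.
Qed.

Lemma derive1_right_min_ge0 f x e : derivable f x 1 -> 0 < e ->
  (forall h, 0 < h < e -> f x <= f (x + h)) -> 0 <= derive1 f x.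
Proof.
move=> df e0 fmin; rewrite derive1E ['D_1 f x]cvg_at_rightE //.
apply: limr_ge.
  rewrite -(cvg_at_rightE (fun h : R => h^-1 *: ((f \o shift x) _ - f x))) //.
  apply: cvg_trans df; apply: cvg_app => A [d d0 Ad].
  by exists d => // h hd h0; apply: Ad => //; exact: lt0r_neq0.
near=> h.
have h0 : 0 < h by near: h; exact: nbhs_right_gt.
have he : h < e by near: h; exact: nbhs_right_lt.
apply: mulr_ge0; first by rewrite invr_ge0 ltW.
by rewrite subr_ge0 /= [_%:A]mulr1 addrC; apply: fmin; rewrite h0 he.
Unshelve. all: by end_near. Qed.

Lemma derive1_left_min_le0 f x e : derivable f x 1 -> 0 < e ->
  (forall h, 0 < h < e -> f x <= f (x - h)) -> derive1 f x <= 0.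
Proof.
move=> df e0 fmin.
have fx : is_derive (x + -1 * 0) 1 f (derive1 f x).
  by rewrite mulr0 addr0 derive1E; exact: derivableP.
have gx := is_derive_comp_affine fx.
have := derive1_right_min_ge0 (ex_derive (is_derive := gx)) e0.
rewrite derive1E derive_val => H; suff : 0 <= -1 * derive1 f x by lra.
apply: H => h /fmin.
have -> : x + -1 * 0 = x by rewrite mulr0 addr0.
have -> : x + -1 * (0 + h) = x - h by rewrite add0r mulN1r.
done.
Qed.

Lemma derive1_supporting_line f x z e : derivable f x 1 -> 0 < e ->
  (forall h, `|h| < e -> f x + h * z <= f (x + h)) -> derive1 f x = z.
Proof.
move=> df e0 fz.
pose g y := f y - z * y.
have gx : is_derive x 1 g (derive1 f x - z).
  have fx : is_derive x 1 f (derive1 f x) by rewrite derive1E; exact: derivableP.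
  have zx := is_derive_scale z x.
  exact: is_deriveB.
have gmin h : `|h| < e -> g x <= g (x + h) by move=> /fz; rewrite /g; lra.
have dg : derivable g x 1 := ex_derive (is_derive := gx).
have := derive1_left_min_le0 dg e0; have := derive1_right_min_ge0 dg e0.
rewrite !derive1E !derive_val -derive1E => ge0 le0.
apply/eqP; rewrite -subr_eq0 eq_le; apply/andP; split.
- apply: le0 => h /andP[h0 he]; apply: gmin.
  by rewrite normrN gtr0_norm.
- apply: ge0 => h /andP[h0 he]; apply: gmin.
  by rewrite gtr0_norm.
Qed.

Lemma derive1_convex_tangent f x y : derivable f x 1 ->
  (forall s, 0 < s < 1 -> f (x + (y - x) * s) <= f x + s * (f y - f x)) ->
  f x + derive1 f x * (y - x) <= f y.
Proof.
move=> df cvx.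
have fx : is_derive (x + (y - x) * 0) 1 f (derive1 f x).
  by rewrite mulr0 addr0 derive1E; exact: derivableP.
have hx := is_derive_comp_affine fx.
have lin := is_derive_scale (f y - f x) 0.
have gx := is_deriveB lin hx.
have := derive1_right_min_ge0 (ex_derive (is_derive := gx)) ltr01.
rewrite derive1E derive_val => H.
suff : 0 <= f y - f x - (y - x) * derive1 f x by nra.
apply: H => h /andP[h0 h1].
suff : (f y - f x) * 0 - f (x + (y - x) * 0) <= (f y - f x) * h - f (x + (y - x) * h).
  by rewrite add0r.
have -> : x + (y - x) * 0 = x by rewrite mulr0 addr0.
have := cvx h; rewrite h0 h1 => /(_ isT); nra.
Qed.

End real_derivative.

Lemma derive1_zero_between (R : realType) (f : R -> R) a b : a <= b ->
  {in `[a, b], forall t, derivable f t 1} ->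
  derive1 f a <= 0 -> 0 < derive1 f b ->
  exists2 c, c \in `[a, b] & derive1 f c = 0.
Proof.
move=> ab df fa fb.
have [c cab cmin] := EVT_min ab (derivable_within_continuous df).
have dfc := df c cab.
have /andP[ac cb] : a <= c <= b by move: cab; rewrite in_itv.
have inab h : 0 < h -> h <= c - a -> c - h \in `[a, b].
  by move=> h0 ha; rewrite in_itv /=; apply/andP; split; lra.
have fc_le0 : derive1 f c <= 0.
  have [a_lt_c|c_le_a] := ltP a c; last by have -> : c = a by lra.
  apply: (derive1_left_min_le0 dfc (e := c - a)); first lra.
  by move=> h /andP[h0 ha]; apply/cmin/inab => //; exact: ltW.
exists c => //; apply/eqP; rewrite eq_le fc_le0 /=.
have c_lt_b : c < b.
  by rewrite lt_neqAle cb andbT; apply: contraTneq fc_le0 => ->; rewrite -ltNge.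
apply: (derive1_right_min_ge0 dfc (e := b - c)); first lra.
by move=> h /andP[h0 hb]; apply: cmin; rewrite in_itv /=; apply/andP; split; lra.
Qed.

Lemma expR_convex_combination (R : realType) (s u v : R) : 0 <= s <= 1 ->
  expR (s * u + (1 - s) * v) <= s * expR u + (1 - s) * expR v.
Proof. by case/andP=> s0 s1; have := convex_expR (Itv01 s0 s1) u v; rewrite !convRE. Qed.

Section moment_generating_function.
Context (R : realType) d (T : measurableType d) (P : probability T R).
Variable X : {RV P >-> R}.
Local Open Scope ereal_scope.

Definition mgf (t : R) := 'E_P[fun w => expR (t * X w)].

Lemma mgfE t : mgf t = \int[P]_w (expR (t * X w))%:E.
Proof. by rewrite /mgf unlock. Qed.

Lemma measurable_expR_mul t : measurable_fun setT (fun w => expR (t * X w)).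
Proof. by apply: measurableT_comp => //; exact: measurable_funM. Qed.

Lemma mgf_ge0 t : 0 <= mgf t.
Proof. by rewrite mgfE; apply: integral_ge0 => w _; rewrite lee_fin expR_ge0. Qed.

Lemma integrable_of_integral_fin_num (g : T -> R) : measurable_fun setT g ->
  \int[P]_w (g w)%:E \is a fin_num -> P.-integrable setT (EFin \o g).
Proof.
move=> mg gfin; have mEg : measurable_fun setT (EFin \o g) by exact/measurable_EFinP.
apply/integrableP; split => //.
rewrite -[fun x => _]/(abse \o (EFin \o g)) fune_abse ge0_integralD //; last 2 first.
- exact: measurable_funepos.
- exact: measurable_funeneg.
move: gfin; rewrite [X in X \is a fin_num]integralE.
have : 0 <= \int[P]_x (EFin \o g)^\+ x by apply: integral_ge0 => x _; exact: funepos_ge0.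
have : 0 <= \int[P]_x (EFin \o g)^\- x by apply: integral_ge0 => x _; exact: funeneg_ge0.
case: (\int[P]_(x in setT) (EFin \o g)^\+ x) => [p| |] //;
case: (\int[P]_(x in setT) (EFin \o g)^\- x) => [n| |] //.
by rewrite -EFinD ltry.
Qed.

Lemma expR_mean_le_mgf mu : 'E_P[X] = mu%:E ->
  forall t, (expR (t * mu))%:E <= mgf t.
Proof.
move=> Xmu t; have Xmu' : \int[P]_w (X w)%:E = mu%:E by rewrite -Xmu unlock.
have iX : P.-integrable setT (EFin \o X).
  by apply: integrable_of_integral_fin_num => //; rewrite Xmu'.
case Et: (mgf t) (mgf_ge0 t) => [r| |] // _; last by rewrite leey.
have iexp : P.-integrable setT (EFin \o (fun w => expR (t * X w))).
  by apply: integrable_of_integral_fin_num; [exact: measurable_expR_mul | rewrite -mgfE Et].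
set c := expR (t * mu).
have icst : P.-integrable setT (EFin \o cst (c * (1 - t * mu))%R).
  exact: finite_measure_integrable_cst.
have tangent_mean : \int[P]_w ((EFin \o cst (c * (1 - t * mu))%R) w
                    + (c * t)%:E * (EFin \o X) w) = c%:E.
  rewrite integralD //; last exact: integrableZl.
  rewrite integralZl // Xmu' -[EFin \o _]/(cst (c * (1 - t * mu))%R%:E).
  rewrite integral_cst //= probability_setT mule1.
  by rewrite -EFinM -EFinD; congr (_%:E); ring.
rewrite -Et mgfE -tangent_mean; apply: le_integral => //.
  by apply: integrableD => //; exact: integrableZl.
move=> w _ /=; rewrite -EFinM -EFinD lee_fin.
have -> : (t * X w = t * mu + (t * X w - t * mu))%R by ring.
rewrite expRD -/c.
have := ler_wpM2l (ltW (expR_gt0 (t * mu))) (expR_ge1Dx (t * X w - t * mu)%R).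
by rewrite -/c; apply: le_trans; rewrite le_eqVlt; apply/orP; left; apply/eqP; ring.
Qed.

Lemma measurable_EFin_expR_mul t : measurable_fun setT (fun w => (expR (t * X w))%:E).
Proof. exact/measurable_EFinP/measurable_expR_mul. Qed.

(* Hoelder's inequality for the exponents 1/s and 1/(1-s), obtained by
   integrating the convexity inequality of [expR] pointwise. *)
Lemma mgf_log_convex a b (la lb s : R) : mgf a = (expR la)%:E ->
  mgf b = (expR lb)%:E -> (0 <= s <= 1)%R ->
  mgf (s * a + (1 - s) * b) <= (expR (s * la + (1 - s) * lb))%:E.
Proof.
move=> Ea Eb s01; have /andP[s0 s1] := s01.
set K := (s * la + (1 - s) * lb)%R.
set ca := (s * expR (K - la))%R; set cb := ((1 - s) * expR (K - lb))%R.
have ca0 : (0 <= ca)%R by rewrite mulr_ge0 ?expR_ge0.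
have cb0 : (0 <= cb)%R by rewrite mulr_ge0 ?expR_ge0 ?subr_ge0.
have pointwise w : (expR ((s * a + (1 - s) * b) * X w)
    <= ca * expR (a * X w) + cb * expR (b * X w))%R.
  have -> : ((s * a + (1 - s) * b) * X w
      = K + (s * (a * X w - la) + (1 - s) * (b * X w - lb)))%R by rewrite /K; ring.
  rewrite expRD.
  apply: le_trans (ler_wpM2l (expR_ge0 K) (expR_convex_combination _ _ s01)) _.
  rewrite /ca /cb !expRB le_eqVlt; apply/orP; left; apply/eqP.
  by field; rewrite !gt_eqF ?expR_gt0.
rewrite mgfE; apply: (@le_trans _ _
    (\int[P]_w (ca%:E * (expR (a * X w))%:E + cb%:E * (expR (b * X w))%:E))).
  apply: ge0_le_integral => //.
  - exact: measurable_EFin_expR_mul.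
  - apply: emeasurable_funD; apply: emeasurable_funM => //;
    exact: measurable_EFin_expR_mul.
  - by move=> w _; rewrite -!EFinM -EFinD lee_fin.
rewrite ge0_integralD //; last 4 first.
- by move=> w _; rewrite -EFinM lee_fin mulr_ge0 // expR_ge0.
- by apply: emeasurable_funM => //; exact: measurable_EFin_expR_mul.
- by move=> w _; rewrite -EFinM lee_fin mulr_ge0 // expR_ge0.
- by apply: emeasurable_funM => //; exact: measurable_EFin_expR_mul.
rewrite !ge0_integralZl_EFin //; try exact: measurable_EFin_expR_mul.
rewrite -!mgfE Ea Eb -!EFinM -EFinD lee_fin /ca /cb !expRB le_eqVlt; apply/orP; left.
by apply/eqP; field; rewrite !gt_eqF ?expR_gt0.
Qed.

End moment_generating_function.

Section legendre.
Context {R : realType}.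
Implicit Types (L : R -> \bar R) (x l : R).
Local Open Scope ereal_scope.

Lemma legendre_ge L x l : (l * x)%:E - L l <= legendre L x.
Proof. by apply: ereal_sup_ubound; exists l. Qed.

Lemma legendre_le L x M : (forall l, (l * x)%:E - L l <= M) -> legendre L x <= M.
Proof. by move=> LM; apply: ge_ereal_sup => _ [l _ <-]; exact: LM. Qed.

End legendre.

Section cumulant_generating_function.
Context (R : realType) d (T : measurableType d) (P : probability T R).
Variables (X : {RV P >-> R}) (mu : R).
Hypothesis Xmu : ('E_P[X] = mu%:E)%E.
Local Notation L := (cgf P X).
Local Notation F := (Lfin (cgf P X)).

Lemma mgf_fin_gt0 t r : mgf X t = r%:E -> 0 < r.
Proof.
move=> Et; have := expR_mean_le_mgf Xmu t; rewrite Et lee_fin.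
exact/lt_le_trans/expR_gt0.
Qed.

Lemma dom_effP t : dom_eff L t <-> exists r, mgf X t = r%:E.
Proof.
rewrite /dom_eff /= /cgf -/(mgf X t).
case: (mgf X t) => [r| |]; split => //; rewrite ?ltry //; first by exists r.
all: by case.
Qed.

Lemma mgf_expR_Lfin t : dom_eff L t -> mgf X t = (expR (F t))%:E.
Proof.
case/dom_effP=> r Et; rewrite /Lfin /cgf -/(mgf X t) Et /= lnK //.
by rewrite posrE (mgf_fin_gt0 Et).
Qed.

Lemma cgf_fin t : dom_eff L t -> L t = (F t)%:E.
Proof. by case/dom_effP=> r Et; rewrite /Lfin /cgf -/(mgf X t) Et. Qed.

Lemma Lfin_ge_mean t : dom_eff L t -> t * mu <= F t.
Proof.
move=> /mgf_expR_Lfin Et; have := expR_mean_le_mgf Xmu t.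
by rewrite Et lee_fin ler_expR.
Qed.

Lemma cgf0 : L 0 = 0%E.
Proof.
rewrite /cgf -/(mgf X 0) mgfE.
under eq_integral do rewrite mul0r expR0.
by rewrite integral_cst //= probability_setT mule1 ln1.
Qed.

Lemma cgf_convex a b s : dom_eff L a -> dom_eff L b -> 0 <= s <= 1 ->
  (L (s * a + (1 - s) * b) <= (s * F a + (1 - s) * F b)%:E)%E.
Proof.
move=> /mgf_expR_Lfin Ea /mgf_expR_Lfin Eb s01.
have := mgf_log_convex Ea Eb s01.
rewrite /cgf -/(mgf X _).
case E: (mgf X _) (mgf_ge0 X (s * a + (1 - s) * b)) => [r| |] //= _.
by rewrite lee_fin => hr; rewrite lee_fin -ler_expR lnK // posrE (mgf_fin_gt0 E).
Qed.

Lemma dom_eff_convex a b z : dom_eff L a -> dom_eff L b -> a <= z <= b ->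
  dom_eff L z.
Proof.
move=> da db /andP[az zb]; have [ab|ba] := ltP a b; last first.
  by have -> : z = a by lra.
have s01 : 0 <= (b - z) / (b - a) <= 1.
  by apply/andP; split; [apply: divr_ge0 | rewrite ler_pdivrMr ?mul1r]; lra.
have := cgf_convex da db s01.
have -> : (b - z) / (b - a) * a + (1 - (b - z) / (b - a)) * b = z.
  by field; lra.
by rewrite /dom_eff /=; move/le_lt_trans; apply; rewrite ltry.
Qed.

Lemma dom_int_convex a b z : dom_int L a -> dom_int L b -> a <= z <= b ->
  dom_int L z.
Proof.
move=> da db /andP[az zb].
have [->|za] := eqVneq z a; first exact: da.
have [->|zb'] := eqVneq z b; first exact: db.
have e0 : 0 < Num.min (z - a) (b - z).
  by rewrite lt_min !subr_gt0 !lt_def za az zb eq_sym zb'.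
apply/nbhs_ballP; exists (Num.min (z - a) (b - z)) => // y.
rewrite -ball_normE /= lt_min => /andP[yza yzb].
apply: (dom_eff_convex (interior_subset da) (interior_subset db)).
by move: yza yzb; rewrite !ltr_norml; lra.
Qed.

Lemma Lfin_convex a b s : dom_eff L a -> dom_eff L b -> 0 <= s <= 1 ->
  F (s * a + (1 - s) * b) <= s * F a + (1 - s) * F b.
Proof.
move=> da db s01; have Lc := cgf_convex da db s01.
have dc : dom_eff L (s * a + (1 - s) * b) by apply: le_lt_trans Lc _; rewrite ltry.
by rewrite cgf_fin // lee_fin in Lc.
Qed.

Lemma dom_int_ball t : dom_int L t ->
  exists2 e, 0 < e & forall h, `|h| < e -> dom_eff L (t + h).
Proof.
case/nbhs_ballP=> e e0 te; exists e => // h he; apply: te.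
by rewrite -ball_normE /= opprD addrA subrr sub0r normrN.
Qed.

Lemma cgf_tangent t l : dom_eff L t -> derivable F t 1 -> dom_eff L l ->
  F t + derive1 F t * (l - t) <= F l.
Proof.
move=> dt dF dl; apply: derive1_convex_tangent => // s /andP[s0 s1].
have -> : t + (l - t) * s = s * l + (1 - s) * t by ring.
have s01 : 0 <= s <= 1 by rewrite !ltW.
have := Lfin_convex dl dt s01; lra.
Qed.

Lemma le_derive1_cgf a b : dom_int L a -> dom_int L b ->
  derivable F a 1 -> derivable F b 1 -> a <= b -> derive1 F a <= derive1 F b.
Proof.
move=> /interior_subset da /interior_subset db dFa dFb ab.
have := cgf_tangent da dFa db; have := cgf_tangent db dFb da.
have [->|ab'] := eqVneq a b; first lra.
have : 0 < b - a by rewrite subr_gt0 lt_neqAle ab' ab.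
nra.
Qed.

Lemma derive1_cgf0 : dom_int L 0 -> derivable F 0 1 -> derive1 F 0 = mu.
Proof.
move=> d0 dF; have [e e0 d0e] := dom_int_ball d0.
apply: (derive1_supporting_line dF e0) => h he.
have F0 : F 0 = 0 by rewrite /Lfin cgf0.
by have := Lfin_ge_mean (d0e _ he); rewrite F0 !add0r.
Qed.

Lemma legendre_cgf_ge t y : dom_eff L t -> ((t * y - F t)%:E <= legendre L y)%E.
Proof. by move=> dt; have := legendre_ge L y t; rewrite cgf_fin // -EFinB. Qed.

Lemma legendre_cgf_derive1 t : dom_eff L t -> derivable F t 1 ->
  legendre L (derive1 F t) = (t * derive1 F t - F t)%:E.
Proof.
move=> dt dF; apply/eqP; rewrite eq_le legendre_cgf_ge // andbT.
apply: legendre_le => l; have [dl|] := pselect (dom_eff L l).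
  rewrite cgf_fin // -EFinB lee_fin; have := cgf_tangent dt dF dl; nra.
by rewrite /dom_eff /= => /negP; rewrite -leNgt leye_eq => /eqP ->; rewrite /= leNye.
Qed.

Lemma legendre_cgf_attained t z : dom_int L t -> derivable F t 1 ->
  (legendre L z <= (t * z - F t)%:E)%E -> derive1 F t = z.
Proof.
move=> dt dF Lz; have [e e0 dte] := dom_int_ball dt.
apply: (derive1_supporting_line dF e0) => h he.
have := le_trans (legendre_cgf_ge z (dte _ he)) Lz; rewrite lee_fin; nra.
Qed.

End cumulant_generating_function.

Lemma balanced_common_slope (R : realType) (f g : R -> R) (a b ri rj : R) :
  0 < ri -> 0 < rj -> a <= 0 -> 0 <= b ->
  (forall t, a <= t <= 0 -> derivable f t 1) ->
  (forall t, 0 <= t <= b -> derivable g t 1) ->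
  (forall t, a <= t <= 0 -> derive1 f t <= derive1 f 0) ->
  (forall t, 0 <= t <= b -> derive1 g 0 <= derive1 g t) ->
  derive1 f a <= derive1 g 0 -> derive1 g 0 < derive1 f 0 ->
  derive1 f 0 <= derive1 g b ->
  exists li lj, [/\ a <= li <= 0, 0 <= lj <= b, ri * li + rj * lj = 0
                  & derive1 f li = derive1 g lj].
Proof.
move=> ri0 rj0 a0 b0 df dg f'_mono g'_mono fa_g0 g0_f0 f0_gb.
pose t0 := Order.max (a / rj) (- (b / ri)).
have scale t : t0 <= t <= 0 -> a <= rj * t <= 0 /\ 0 <= - (ri * t) <= b.
  rewrite ge_max => /andP[/andP[ta tb] t0'].
  move: ta tb; rewrite ler_pdivrMr // lerNl ler_pdivlMr // => ta tb.
  split; apply/andP; split; nra.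
(* The critical points of [psi] are exactly the balanced common slopes. *)
pose psi t := ri * f (rj * t) + rj * g (- (ri * t)).
have psi' t : t0 <= t <= 0 ->
    is_derive t 1 psi (ri * rj * (derive1 f (rj * t) - derive1 g (- (ri * t)))).
  case/scale=> /andP[ta t0'] /andP[t0'' tb].
  have hf : is_derive (0 + rj * t) 1 f (derive1 f (rj * t)).
    by rewrite add0r derive1E; apply: derivableP; apply: df; rewrite ta t0'.
  have hg : is_derive (0 + - ri * t) 1 g (derive1 g (- (ri * t))).
    by rewrite add0r mulNr derive1E; apply: derivableP; apply: dg; rewrite t0'' tb.
  have hf' := is_derive_comp_affine hf; have hg' := is_derive_comp_affine hg.
  have -> : psi = (fun s => ri * f (0 + rj * s) + rj * g (0 + - ri * s)).
    by apply/funext => s; rewrite /psi !add0r mulNr.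
  by apply: is_derive_eq; rewrite /GRing.scale /=; ring.
have t0_le0 : t0 <= 0.
  rewrite ge_max oppr_le0 divr_ge0 ?andbT //; last exact: ltW.
  by rewrite mulr_le0_ge0 // invr_ge0 ltW.
have t0_in : t0 <= t0 <= 0 by rewrite lexx t0_le0.
have psi'E t : t0 <= t <= 0 ->
    derive1 psi t = ri * rj * (derive1 f (rj * t) - derive1 g (- (ri * t))).
  by move=> /psi' ?; rewrite derive1E derive_val.
have [c c_in psi'c] : exists2 c, c \in `[t0, 0] & derive1 psi c = 0.
  apply: derive1_zero_between => //.
  - by move=> t; rewrite in_itv => /psi' ?; exact: ex_derive.
  - rewrite psi'E // pmulr_rle0 ?mulr_gt0 // subr_le0.
    have [/andP[ta t0'] /andP[t0'' tb]] := scale t0 t0_in.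
    have [t0a|t0b] : rj * t0 = a \/ - (ri * t0) = b.
      rewrite /t0; have [ab|ba] := leP (a / rj) (- (b / ri)).
      + by right; rewrite mulrN opprK mulrC divfK ?gt_eqF.
      + by left; rewrite mulrC divfK ?gt_eqF.
    + by rewrite t0a (le_trans fa_g0) // g'_mono // t0'' tb.
    + by rewrite t0b (le_trans _ f0_gb) // f'_mono // ta t0'.
  - by rewrite psi'E ?lexx ?t0_le0 // !mulr0 oppr0 pmulr_rgt0 ?mulr_gt0 // subr_gt0.
have c_in' : t0 <= c <= 0 by move: c_in; rewrite in_itv.
have [rjc_in ric_in] := scale c c_in'.
exists (rj * c), (- (ri * c)); split => //; first by ring.
move: psi'c; rewrite psi'E // => /eqP.
by rewrite !mulf_eq0 (gt_eqF ri0) (gt_eqF rj0) subr_eq0 => /eqP.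
Qed.

Lemma weighted_lower_bounds_tight (R : realDomainType) (wa wb x y : R) (a b : \bar R) :
  0 < wa -> 0 < wb -> (x%:E <= a)%E -> (y%:E <= b)%E ->
  (wa%:E * a + wb%:E * b <= (wa * x + wb * y)%:E)%E -> a = x%:E.
Proof.
move=> wa0 wb0.
have wa_oo : (wa%:E * +oo = +oo)%E by rewrite mulry (gtr0_sg wa0) mul1e.
have wb_oo : (wb%:E * +oo = +oo)%E by rewrite mulry (gtr0_sg wb0) mul1e.
case: a => [a| |]; case: b => [b| |] //=; rewrite ?leeNy_eq //.
- rewrite !lee_fin => xa yb h; congr (_%:E); apply/eqP; rewrite eq_le xa andbT.
  have hb : 0 <= wb * (b - y) by apply: mulr_ge0; [exact: ltW | rewrite subr_ge0].
  have : wa * (a - x) <= 0 by lra.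
  by rewrite pmulr_rle0 // subr_le0.
- by move=> _ _; rewrite wb_oo -EFinM addey.
- by move=> _ _; rewrite wa_oo -EFinM addye.
- by move=> _ _; rewrite wa_oo wb_oo addye.
Qed.

Lemma cgf_balanced_common_slope (R : realType) d (T : measurableType d)
    (P : probability T R) (X Y : {RV P >-> R}) (mx my rx ry sx sy : R) :
  ('E_P[X] = mx%:E)%E -> ('E_P[Y] = my%:E)%E -> my < mx -> 0 < rx -> 0 < ry ->
  dom_int (cgf P X) 0 -> dom_int (cgf P Y) 0 ->
  (forall t, dom_int (cgf P X) t -> derivable (Lfin (cgf P X)) t 1) ->
  (forall t, dom_int (cgf P Y) t -> derivable (Lfin (cgf P Y)) t 1) ->
  dom_int (cgf P X) sx -> derive1 (Lfin (cgf P X)) sx = my ->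
  dom_int (cgf P Y) sy -> derive1 (Lfin (cgf P Y)) sy = mx ->
  exists lx ly, [/\ dom_int (cgf P X) lx, dom_int (cgf P Y) ly,
    rx * lx + ry * ly = 0 & derive1 (Lfin (cgf P X)) lx = derive1 (Lfin (cgf P Y)) ly].
Proof.
move=> Xmx Ymy my_mx rx0 ry0 dX0 dY0 dFx dFy dsx Fx'sx dsy Fy'sy.
have Fx'0 := derive1_cgf0 Xmx dX0 (dFx 0 dX0).
have Fy'0 := derive1_cgf0 Ymy dY0 (dFy 0 dY0).
have Fx'_mono a b (da : dom_int (cgf P X) a) (db : dom_int (cgf P X) b) :=
  le_derive1_cgf Xmx da db (dFx a da) (dFx b db).
have Fy'_mono a b (da : dom_int (cgf P Y) a) (db : dom_int (cgf P Y) b) :=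
  le_derive1_cgf Ymy da db (dFy a da) (dFy b db).
have sx_le0 : sx <= 0.
  rewrite leNgt; apply/negP => /ltW /(Fx'_mono _ _ dX0 dsx).
  by rewrite Fx'0 Fx'sx leNgt my_mx.
have sy_ge0 : 0 <= sy.
  rewrite leNgt; apply/negP => /ltW /(Fy'_mono _ _ dsy dY0).
  by rewrite Fy'0 Fy'sy leNgt my_mx.
have dom_x t : sx <= t <= 0 -> dom_int (cgf P X) t := dom_int_convex Xmx dsx dX0.
have dom_y t : 0 <= t <= sy -> dom_int (cgf P Y) t := dom_int_convex Ymy dY0 dsy.
have [lx [ly [/dom_x dlx /dom_y dly balanced slope]]] : exists lx ly,
    [/\ sx <= lx <= 0, 0 <= ly <= sy, rx * lx + ry * ly = 0
       & derive1 (Lfin (cgf P X)) lx = derive1 (Lfin (cgf P Y)) ly].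
  apply: (balanced_common_slope rx0 ry0 sx_le0 sy_ge0).
  - by move=> t /dom_x /dFx.
  - by move=> t /dom_y /dFy.
  - by move=> t ht; apply: Fx'_mono (dom_x t ht) dX0 _; case/andP: ht.
  - by move=> t ht; apply: Fy'_mono dY0 (dom_y t ht) _; case/andP: ht.
  - by rewrite Fx'sx Fy'0.
  - by rewrite Fx'0 Fy'0.
  - by rewrite Fx'0 Fy'sy.
by exists lx, ly.
Qed.

Lemma weighted_legendre_argmin (R : realType) d (T : measurableType d)
    (P : probability T R) (X Y : {RV P >-> R}) (mx my rx ry lx ly : R) :
  ('E_P[X] = mx%:E)%E -> ('E_P[Y] = my%:E)%E -> 0 < rx -> 0 < ry ->
  dom_int (cgf P X) lx -> dom_int (cgf P Y) ly ->
  derivable (Lfin (cgf P X)) lx 1 -> derivable (Lfin (cgf P Y)) ly 1 ->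
  rx * lx + ry * ly = 0 ->
  derive1 (Lfin (cgf P X)) lx = derive1 (Lfin (cgf P Y)) ly ->
  let f x := (rx%:E * legendre (cgf P X) x + ry%:E * legendre (cgf P Y) x)%E in
  (forall y, (f (derive1 (Lfin (cgf P X)) lx) <= f y)%E) /\
  (forall z, (forall y, (f z <= f y)%E) -> z = derive1 (Lfin (cgf P X)) lx).
Proof.
move=> Xmx Ymy rx0 ry0 dlx dly dFx dFy balanced slope f.
set Fx := Lfin (cgf P X); set Fy := Lfin (cgf P Y).
set C := - (rx * Fx lx + ry * Fy ly).
have dual_line y : rx * (lx * y - Fx lx) + ry * (ly * y - Fy ly) = C.
  have -> : rx * (lx * y - Fx lx) + ry * (ly * y - Fy ly)
          = (rx * lx + ry * ly) * y + C by rewrite /C; ring.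
  by rewrite balanced mul0r add0r.
have f_ge y : (C%:E <= f y)%E.
  rewrite -(dual_line y) EFinD !EFinM.
  apply: leeD; (apply: lee_wpmul2l; first by rewrite lee_fin ltW).
  - exact: legendre_cgf_ge _ (interior_subset dlx).
  - exact: legendre_cgf_ge _ (interior_subset dly).
have f_min : f (derive1 Fx lx) = C%:E.
  rewrite /f {2}slope (legendre_cgf_derive1 Xmx (interior_subset dlx) dFx).
  rewrite (legendre_cgf_derive1 Ymy (interior_subset dly) dFy) -slope.
  by rewrite -(dual_line (derive1 Fx lx)) EFinD !EFinM.
split => [y|z zmin]; first by rewrite f_min.
apply/esym/(legendre_cgf_attained dlx dFx).
rewrite (weighted_lower_bounds_tight rx0 ry0 (legendre_cgf_ge z (interior_subset dlx))
          (legendre_cgf_ge z (interior_subset dly))) //.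
by rewrite dual_line -f_min zmin.
Qed.

Unset Implicit Arguments.
Local Open Scope ereal_scope.
Local Open Scope ring_scope.

Theorem lemma2 (R : realType) (d : measure_display) (T : measurableType d)
  (P : probability T R) (k m : nat) (hk : (2 <= k)%N) (hm1 : (1 <= m)%N)
  (hmk : (m < k)%N)
  (X : 'I_k -> {RV P >-> R}) (mu : 'I_k -> R)
  (hmu : forall l, 'E_P[X l] = (mu l)%:E)
  (hord : forall a b : 'I_k, (a < b)%N -> mu b < mu a)
  (hA2 : forall l, assumption2 (cgf P (X l)))
  (hA3 : forall l, assumption3 (cgf P (X l)))
  (hA4 : forall x : R, (exists a b : 'I_k, mu a <= x <= mu b) ->
           forall l, interior (grad_range (cgf P (X l))) x)
  (i j : 'I_k) (hi : (i < m)%N) (hj : (m <= j)%N)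
  (ri rj : R) (hri : 0 < ri) (hrj : 0 < rj) :
  let f := fun x : R => (ri%:E * legendre (cgf P (X i)) x
                         + rj%:E * legendre (cgf P (X j)) x)%E in
  exists x : R, (forall y, (f x <= f y)%E) /\
    (forall z, (forall y, (f z <= f y)%E) -> z = x).
Proof.
move=> f; pose F l := Lfin (cgf P (X l)).
have mu_ji : mu j < mu i by apply: hord; exact: leq_trans hi hj.
have dF l t : dom_int (cgf P (X l)) t -> derivable (F l) t 1.
  by case: (hA3 l) => _ _ dF _; exact: dF.
have slope l a : exists2 s, dom_int (cgf P (X l)) s & derive1 (F l) s = mu a.
  have : exists b c : 'I_k, mu b <= mu a <= mu c by exists a, a; rewrite lexx.
  by move=> /hA4 /(_ l) /interior_subset [s ds <-]; exists s.
have [si dsi F'si] := slope i j.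
have [sj dsj F'sj] := slope j i.
have [li [lj [dli dlj balanced slope_eq]]] := cgf_balanced_common_slope (hmu i) (hmu j)
  mu_ji hri hrj (hA2 i) (hA2 j) (dF i) (dF j) dsi F'si dsj F'sj.
exists (derive1 (F i) li).
exact: weighted_legendre_argmin (hmu i) (hmu j) hri hrj dli dlj (dF i li dli) (dF j lj dlj)
  balanced slope_eq.
Qed.
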